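(* Let $(x^1,x^2,z)$ be coordinates, $a,b\in\{1,2\}$, let $g_{ab}$ be functions of $(x^1,x^2,z)$ forming a positive definite matrix with $(\det g_{ab})_{,z}=0$, let $\beta_a$ be functions with $\beta_{a,z}=0$, and let $c$ be a constant. Then the data $$g=(dz+\beta_adx^a)^2+g_{ab}dx^adx^b,\qquad T^{ij}=c\big(\delta^i_z\delta^j_z-\tfrac13g^{ij}\big)$$ satisfy the momentum constraint $\nabla_iT^{ij}=0$ and $H=0$.
   Context: Initial data: Riemannian metric $g_{ij}$ and symmetric tensor $K_{ij}$; $H=g^{ij}K_{ij}$, $T^{ij}=K^{ij}-Hg^{ij}$ (so $K^{ij}=T^{ij}-\frac12(g_{kl}T^{kl})g^{ij}$). Momentum constraint: $\nabla_iT^{ij}=0$. *)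

From HB Require Import structures.
From mathcomp Require Import all_boot all_order all_algebra.
From mathcomp Require Import all_classical all_reals all_analysis.
Set Implicit Arguments. Unset Strict Implicit. Unset Printing Implicit Defensive.
Import Order.TTheory GRing.Theory Num.Theory.
Import numFieldNormedType.Exports.
Local Open Scope ring_scope.

Section InitialData.
Variable R : realType.
Variable n : nat.

(* Points of coordinate space R^n are row vectors; coordinate i is x 0 i. *)
Notation V := 'rV[R]_n.

Definition ecoord (i : 'I_n) : V := delta_mx 0 i.

Definition partial (i : 'I_n) (f : V -> R) (x : V) : R := 'D_(ecoord i) f x.

Definition christoffel (g : V -> 'M[R]_n) (k i j : 'I_n) (x : V) : R :=
  2^-1 * \sum_(l < n) invmx (g x) k l *
    (partial i (fun y => g y l j) x + partial j (fun y => g y l i) x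
     - partial l (fun y => g y i j) x).

Definition divergence (g : V -> 'M[R]_n) (T : V -> 'M[R]_n) (j : 'I_n) (x : V) : R :=
  \sum_(i < n) partial i (fun y => T y i j) x
  + \sum_(i < n) \sum_(k < n) christoffel g i i k x * T x k j
  + \sum_(i < n) \sum_(k < n) christoffel g j i k x * T x i k.

Definition Kup (g T : V -> 'M[R]_n) (x : V) : 'M[R]_n :=
  T x - (2^-1 * \sum_(k < n) \sum_(l < n) g x k l * T x k l) *: invmx (g x).

Definition Kdown (g T : V -> 'M[R]_n) (x : V) : 'M[R]_n :=
  g x *m Kup g T x *m g x.

Definition meanH (g T : V -> 'M[R]_n) (x : V) : R :=
  \sum_(i < n) \sum_(j < n) invmx (g x) i j * Kdown g T x i j.

Definition posdef_mx (m : nat) (A : 'M[R]_m) : Prop :=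
  A^T = A /\ forall v : 'rV[R]_m, v != 0 -> 0 < (v *m A *m v^T) 0 0.

End InitialData.

(* Three-dimensional setting: coordinates (x^1, x^2, z) are indices 0, 1, 2;
   z is the index ord_max : 'I_3.  For i : 'I_3, unlift ord_max i = Some a
   (a : 'I_2) iff i is the x^a coordinate, and None iff i = z. *)
Definition zidx : 'I_3 := ord_max.

(* g = (dz + beta_a dx^a)^2 + g_ab dx^a dx^b, i.e.
   g_{zz} = 1, g_{za} = g_{az} = beta_a, g_{ab} (full) = g_ab + beta_a beta_b *)
Definition kaluza_metric (R : realType) (gab : 'rV[R]_3 -> 'M[R]_2)
  (beta : 'rV[R]_3 -> 'rV[R]_2) (x : 'rV[R]_3) : 'M[R]_3 :=
  \matrix_(i, j)
    match unlift zidx i, unlift zidx j with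
    | Some a, Some b => gab x a b + beta x 0 a * beta x 0 b
    | Some a, None => beta x 0 a
    | None, Some b => beta x 0 b
    | None, None => 1
    end.

Definition corollary_T (R : realType) (g : 'rV[R]_3 -> 'M[R]_3) (c : R)
  (x : 'rV[R]_3) : 'M[R]_3 :=
  \matrix_(i, j) (c * ((i == zidx)%:R * (j == zidx)%:R - 3^-1 * invmx (g x) i j)).

(* Write Z = d/dz, so that T = c (Z (x) Z - g^-1 / 3).  The inverse metric is
   covariantly constant, hence only Z (x) Z contributes to the divergence:
   nabla_i (Z^i Z^j) = (div Z) Z^j + Gamma^j_zz.  In block form
   g = [[g_ab + beta^T beta, beta^T], [beta, 1]] the z-derivative of g is
   [[d_z g_ab, 0], [0, 0]] and the upper-left block of g^-1 is g_ab^-1, so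
   div Z = 1/2 tr (g^-1 d_z g) = 1/2 d_z det g_ab / det g_ab = 0, while
   Gamma^j_zz = 0 because g_zz = 1 and d_z g_az = d_z beta_a = 0.  Finally
   tr (g T) = c g_zz - c = 0, so K = T and H = -1/2 tr (g T) = 0. *)

From HB Require Import structures.
From mathcomp Require Import all_boot all_order all_algebra.
From mathcomp Require Import all_classical all_reals all_analysis.
From mathcomp Require Import ring.
Set Implicit Arguments. Unset Strict Implicit. Unset Printing Implicit Defensive.
Import Order.TTheory GRing.Theory Num.Theory.
Import numFieldNormedType.Exports.
Local Open Scope ring_scope.

Section ChristoffelAlgebra.
Variables (R : numFieldType) (n : nat) (gi : 'M[R]_n) (D : 'I_n -> 'M[R]_n).

(* Pointwise versions of [christoffel] and [divergence]: [gi] stands for the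
   inverse metric and [D l], [DT l] for the derivatives along the l-th axis. *)
Definition christoffel_of k i j :=
  2^-1 * \sum_l gi k l * (D i l j + D j l i - D l i j).

Definition divergence_of (T : 'M[R]_n) (DT : 'I_n -> 'M[R]_n) j :=
  \sum_i DT i i j
  + \sum_i \sum_k christoffel_of i i k * T k j
  + \sum_i \sum_k christoffel_of j i k * T i k.

Lemma divergence_of_lin a b S T DS DT j :
  divergence_of (a *: S + b *: T) (fun i => a *: DS i + b *: DT i) j =
  a * divergence_of S DS j + b * divergence_of T DT j.
Proof.
rewrite /divergence_of !mulrDr addrACA [X in _ = X + _]addrACA.
congr (_ + _ + _); rewrite !mulr_sumr -big_split; apply: eq_bigr => i _.
  by rewrite !mxE.
all: rewrite !mulr_sumr -big_split; apply: eq_bigr => k _.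
all: by rewrite !mxE mulrDr !(mulrCA (christoffel_of _ _ _)).
Qed.

Lemma christoffel_of_kk_eq0 j k :
  (forall l, D l k k = 0) -> (forall l, D k l k = 0) -> christoffel_of j k k = 0.
Proof.
move=> Dkk Dkl; rewrite /christoffel_of big1 ?mulr0 // => l _.
by rewrite Dkk Dkl subr0 addr0 mulr0.
Qed.

Hypotheses (gi_sym : gi^T = gi) (D_sym : forall k, (D k)^T = D k).

Let giC i j : gi i j = gi j i.
Proof. by move/matrixP: gi_sym => /(_ j i); rewrite mxE. Qed.

Lemma christoffel_of_trace k : \sum_i christoffel_of i i k = 2^-1 * \tr (gi *m D k).
Proof.
rewrite -mulr_sumr; congr (_ * _).
have swap : \sum_i \sum_l gi i l * D i l k = \sum_i \sum_l gi i l * D l i k.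
  by rewrite exchange_big; apply: eq_bigr => l _; apply: eq_bigr => i _; rewrite giC.
under eq_bigr do under eq_bigr do rewrite mulrBr mulrDr.
under eq_bigr do rewrite sumrB big_split.
rewrite sumrB big_split /= swap addrAC subrr add0r.
by apply: eq_bigr => i _; rewrite mxE.
Qed.

Lemma christoffel_of_contract (S : 'M[R]_n) j : S^T = S ->
  \sum_i \sum_k christoffel_of j i k * S i k =
  \sum_l gi j l * (\sum_i (D i *m S) l i - 2^-1 * \tr (D l *m S)).
Proof.
move=> S_sym; have SC i k : S i k = S k i.
  by move/matrixP: S_sym => /(_ k i); rewrite mxE.
transitivity (\sum_l gi j l * (2^-1 *
  \sum_i \sum_k (D i l k + D k l i - D l i k) * S i k)).
  under eq_bigr do under eq_bigr do
    rewrite /christoffel_of -mulrA mulr_suml mulr_sumr.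
  under [RHS]eq_bigr do rewrite mulrA mulr_sumr.
  under [RHS]eq_bigr do under eq_bigr do rewrite mulr_sumr.
  rewrite [RHS]exchange_big; apply: eq_bigr => i _.
  rewrite [RHS]exchange_big; apply: eq_bigr => k _.
  by apply: eq_bigr => l _; ring.
apply: eq_bigr => l _; congr (_ * _).
have swap : \sum_i \sum_k D k l i * S i k = \sum_i (D i *m S) l i.
  rewrite exchange_big; apply: eq_bigr => i _; rewrite mxE.
  by apply: eq_bigr => k _; rewrite SC.
under eq_bigr do under eq_bigr do rewrite mulrBl mulrDl.
under eq_bigr do rewrite sumrB big_split.
rewrite sumrB big_split /= swap.
have -> : \sum_i \sum_k D i l k * S i k = \sum_i (D i *m S) l i.
  by apply: eq_bigr => i _; rewrite mxE; apply: eq_bigr => k _; rewrite SC.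
have -> : \sum_i \sum_k D l i k * S i k = \tr (D l *m S).
  by apply: eq_bigr => i _; rewrite mxE; apply: eq_bigr => k _; rewrite SC.
by field.
Qed.

Lemma divergence_of_inv_metric j :
  divergence_of gi (fun i => - (gi *m D i *m gi)) j = 0.
Proof.
rewrite /divergence_of (christoffel_of_contract _ gi_sym) exchange_big /=.
under [X in _ + X + _]eq_bigr do rewrite -mulr_suml christoffel_of_trace.
under [X in X + _ + _]eq_bigr do rewrite mxE.
under [X in _ + X]eq_bigr do rewrite mulrBr.
rewrite sumrN sumrB.
have -> : \sum_l gi j l * \sum_i (D i *m gi) l i = \sum_i (gi *m D i *m gi) i j.
  under eq_bigr do rewrite mulr_sumr.
  rewrite exchange_big; apply: eq_bigr => i _.
  have /matrixP/(_ j i) : (gi *m D i *m gi)^T = gi *m (D i *m gi).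
    by rewrite !trmx_mul gi_sym D_sym.
  by rewrite !mxE => ->.
have -> : \sum_k 2^-1 * \tr (gi *m D k) * gi k j =
    \sum_l gi j l * (2^-1 * \tr (D l *m gi)).
  by apply: eq_bigr => k _; rewrite mxtrace_mulC giC mulrC.
by rewrite addrACA addNr subrr addr0.
Qed.

Lemma divergence_of_delta z j :
  divergence_of (delta_mx z z) (fun=> 0) j =
  2^-1 * \tr (gi *m D z) * (j == z)%:R + christoffel_of j z z.
Proof.
have sum_eqz (F : 'I_n -> R) : \sum_k F k * (k == z)%:R = F z.
  rewrite (bigD1 z) //= big1 ?addr0 ?eqxx ?mulr1 // => k /negbTE ->.
  by rewrite mulr0.
rewrite /divergence_of big1 ?add0r => [|i _]; last by rewrite mxE.
under eq_bigr do under eq_bigr do rewrite mxE -mulnb natrM mulrA.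
under [X in _ + X]eq_bigr do under eq_bigr do rewrite mxE -mulnb natrM mulrA.
under eq_bigr do rewrite -mulr_suml sum_eqz.
under [X in _ + X]eq_bigr do rewrite sum_eqz.
by rewrite sum_eqz -mulr_suml christoffel_of_trace.
Qed.

End ChristoffelAlgebra.

Section TwoByTwo.
Variable R : comPzRingType.

Let ord2E :
  (widen_ord (leqnSn 1) ord_max = 0 :> 'I_2) * (ord_max = 1 :> 'I_2) *
  (lift 0 (0 : 'I_1) = 1 :> 'I_2) * (lift 1 (0 : 'I_1) = 0 :> 'I_2).
Proof. by do !split; apply/val_inj. Qed.

Lemma det_mx2 (A : 'M[R]_2) : \det A = A 0 0 * A 1 1 - A 0 1 * A 1 0.
Proof.
rewrite (expand_det_row _ 0) !big_ord_recr big_ord0 /= add0r /cofactor.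
by rewrite !det_mx11 !mxE !ord2E /= !expr0 !expr1; ring.
Qed.

Lemma mxtrace_adj_mx2 (A B : 'M[R]_2) :
  \tr (\adj A *m B) = A 1 1 * B 0 0 - A 0 1 * B 1 0 - A 1 0 * B 0 1 + A 0 0 * B 1 1.
Proof.
rewrite /mxtrace !big_ord_recr big_ord0 /= add0r !mxE !big_ord_recr big_ord0 /=.
rewrite !add0r !mxE /cofactor !det_mx11 !mxE !ord2E /= ?big_ord0 ?add0r.
by rewrite !expr0 !expr1 ?expr2; ring.
Qed.

End TwoByTwo.

Lemma mxtrace_invmx_mul (R : fieldType) n (A B : 'M[R]_n) : A \in unitmx ->
  \tr (invmx A *m B) = (\det A)^-1 * \tr (\adj A *m B).
Proof. by move=> Au; rewrite /invmx Au -scalemxAl mxtraceZ. Qed.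

Lemma mxtrace_mul_delta (R : pzSemiRingType) n (A : 'M[R]_n) i :
  \tr (A *m delta_mx i i) = A i i.
Proof.
rewrite /mxtrace (bigD1 i) //= big1 ?addr0 => [|k /negbTE ki].
  rewrite mxE (bigD1 i) //= big1 ?addr0 ?mxE ?eqxx ?mulr1 // => l /negbTE li.
  by rewrite mxE li mulr0.
by rewrite mxE big1 // => l _; rewrite mxE ki andbF mulr0.
Qed.

Lemma mulmx_kaluza_block_inv (R : comUnitRingType) n m (A : 'M[R]_n)
    (b : 'M[R]_(m, n)) : A \in unitmx ->
  block_mx (A + b^T *m b) b^T b 1%:M *m
  block_mx (invmx A) (- (invmx A *m b^T)) (- (b *m invmx A))
           (1%:M + b *m invmx A *m b^T) = 1%:M.
Proof.
move=> Au; rewrite mulmx_block [RHS](scalar_mx_block n m); congr block_mx.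
- by rewrite mulmxDl mulmxV // mulmxN mulmxA addrK.
- rewrite mulmxN mulmxDl mulmxDr !mulmxA mulmxV // mul1mx mulmx1.
  by rewrite opprD addrACA !addNr addr0.
- by rewrite mul1mx subrr.
- by rewrite mul1mx mulmxN !mulmxA (addrC 1%:M) addKr.
Qed.

Lemma posdef_mx_unit (R : realType) m (A : 'M[R]_m) : posdef_mx A -> A \in unitmx.
Proof.
move=> [_ Apos]; rewrite -row_free_unit; apply: inj_row_free => u uA0.
by apply/eqP/contraT => /Apos; rewrite uA0 mul0mx mxE ltxx.
Qed.

Section MatrixCalculus.
Variables (R : realType) (V : normedModType R).
Implicit Types (x v : V).

Lemma derivable_big_sum (I : Type) (r : seq I) (P : pred I) (F : I -> V -> R) x v :
  (forall i, P i -> derivable (F i) x v) ->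
  derivable (fun y => \sum_(i <- r | P i) F i y) x v.
Proof.
move=> dF; rewrite -fct_sumE.
by elim/big_ind: _ => // f g; apply: derivableD.
Qed.

Lemma derivable_big_prod (I : Type) (r : seq I) (P : pred I) (F : I -> V -> R) x v :
  (forall i, P i -> derivable (F i) x v) ->
  derivable (fun y => \prod_(i <- r | P i) F i y) x v.
Proof.
move=> dF; rewrite -fct_prodE.
by elim/big_ind: _ => // f g; apply: derivableM.
Qed.

Lemma derive_mx_entry m n (M : V -> 'M[R]_(m, n)) x v i j :
  derivable M x v -> 'D_v (fun y => M y i j) x = 'D_v M x i j.
Proof. by move=> dM; rewrite derive_mx // mxE. Qed.

Lemma derivable_det m (M : V -> 'M[R]_m) x v :
  derivable M x v -> derivable (fun y => \det (M y)) x v.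
Proof.
move=> /derivable_mxP dM; apply: derivable_big_sum => s _.
by apply: derivableM; [exact: derivable_cst | apply: derivable_big_prod => i _].
Qed.

Lemma derivable_adj m (M : V -> 'M[R]_m) x v :
  derivable M x v -> derivable (fun y => \adj (M y)) x v.
Proof.
move=> dM; apply/derivable_mxP => i j.
under [fun y => _]funext do rewrite mxE.
apply: derivableM; first exact: derivable_cst.
apply: derivable_det; apply/derivable_mxP => a b.
under [fun y => _]funext do rewrite !mxE.
by move/derivable_mxP: dM; apply.
Qed.

Lemma derive_det_mx2 (A : V -> 'M[R]_2) x v :
  derivable A x v -> 'D_v (fun y => \det (A y)) x = \tr (\adj (A x) *m 'D_v A x).
Proof.
move=> dA; have /derivable_mxP dAe := dA.
rewrite mxtrace_adj_mx2 -!derive_mx_entry //.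
under [fun y => _]funext do rewrite det_mx2.
rewrite deriveB; try exact: derivableM.
by rewrite !deriveM // /GRing.scale /=; ring.
Qed.

Lemma derivable_trmx m n (M : V -> 'M[R]_(m, n)) x v :
  derivable M x v -> derivable (fun y => (M y)^T) x v.
Proof.
move=> /derivable_mxP dM; apply/derivable_mxP => i j.
by under [fun y => _]funext do rewrite mxE; exact: dM.
Qed.

Lemma derive_trmx m n (M : V -> 'M[R]_(m, n)) x v :
  derivable M x v -> 'D_v (fun y => (M y)^T) x = ('D_v M x)^T.
Proof.
move=> dM; apply/matrixP => i j.
rewrite -derive_mx_entry; last exact: derivable_trmx.
by under [fun y => _]funext do rewrite mxE; rewrite mxE derive_mx_entry.
Qed.

Lemma derive_sym m (M : V -> 'M[R]_m) x v :
  (\forall y \near x, (M y)^T = M y) -> derivable M x v ->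
  ('D_v M x)^T = 'D_v M x.
Proof. by move=> Msym dM; rewrite -derive_trmx //; exact: near_eq_derive. Qed.

Lemma derivable_mulmx m n p (M : V -> 'M[R]_(m, n)) (N : V -> 'M[R]_(n, p)) x v :
  derivable M x v -> derivable N x v -> derivable (fun y => M y *m N y) x v.
Proof.
move=> /derivable_mxP dM /derivable_mxP dN; apply/derivable_mxP => i j.
under [fun y => _]funext do rewrite mxE.
by apply: derivable_big_sum => k _; apply: derivableM.
Qed.

Lemma derive_mulmx m n p (M : V -> 'M[R]_(m, n)) (N : V -> 'M[R]_(n, p)) x v :
  derivable M x v -> derivable N x v ->
  'D_v (fun y => M y *m N y) x = 'D_v M x *m N x + M x *m 'D_v N x.
Proof.
move=> dM dN; apply/matrixP => i j.
have /derivable_mxP dMe := dM; have /derivable_mxP dNe := dN.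
rewrite -derive_mx_entry; last exact: derivable_mulmx.
under [fun y => _]funext do rewrite mxE.
rewrite -fct_sumE derive_sum => [|k]; last exact: derivableM.
rewrite !mxE -big_split; apply: eq_bigr => k _ /=.
rewrite deriveM // !derive_mx_entry // addrC.
by congr (_ + _); exact: mulrC.
Qed.

Lemma derivable_invmx m (M : V -> 'M[R]_m) x v :
  (\forall y \near x, M y \in unitmx) -> derivable M x v ->
  derivable (fun y => invmx (M y)) x v.
Proof.
move=> uM dM; have uMx : M x \in unitmx := nbhs_singleton uM.
apply: (@near_eq_derivable _ _ _ (fun y => (\det (M y))^-1 *: \adj (M y))).
  by near=> y; rewrite /invmx (near uM y).
apply/derivable_mxP => i j; under [fun y => _]funext do rewrite mxE.
apply: derivableM; last by move: i j; apply/derivable_mxP/derivable_adj.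
by apply: derivableV; [rewrite -unitfE -unitmxE | exact: derivable_det].
Unshelve. all: by end_near. Qed.

Lemma derive_invmx m (M : V -> 'M[R]_m) x v :
  (\forall y \near x, M y \in unitmx) -> derivable M x v ->
  'D_v (fun y => invmx (M y)) x = - (invmx (M x) *m 'D_v M x *m invmx (M x)).
Proof.
move=> uM dM; have uMx : M x \in unitmx := nbhs_singleton uM.
have dN := derivable_invmx uM dM.
have : 'D_v (fun y => M y *m invmx (M y)) x = 0.
  rewrite (@near_eq_derive _ _ _ _ (cst 1%:M)) ?derive_cst //.
  by near=> y; rewrite mulmxV // (near uM y).
rewrite derive_mulmx // => /eqP; rewrite addr_eq0.
move=> /eqP/(congr1 (mulmx (invmx (M x)))); rewrite mulmxN mulKmx // => e.
by rewrite -[LHS]opprK -e mulmxA.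
Unshelve. all: by end_near. Qed.

Variables (m1 m2 n1 n2 : nat) (A : V -> 'M[R]_(m1, n1)) (B : V -> 'M[R]_(m1, n2))
  (C : V -> 'M[R]_(m2, n1)) (E : V -> 'M[R]_(m2, n2)) (x v : V).
Hypotheses (dA : derivable A x v) (dB : derivable B x v)
  (dC : derivable C x v) (dE : derivable E x v).

Lemma derivable_block_mx :
  derivable (fun y => block_mx (A y) (B y) (C y) (E y)) x v.
Proof.
apply/derivable_mxP => i j.
case: (split_ordP i) => i' ->; case: (split_ordP j) => j' ->.
- apply: (near_eq_derivable _ ((derivable_mxP _ _ _).1 dA i' j')).
  by apply: nearW => y; rewrite block_mxEul.
- apply: (near_eq_derivable _ ((derivable_mxP _ _ _).1 dB i' j')).
  by apply: nearW => y; rewrite block_mxEur.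
- apply: (near_eq_derivable _ ((derivable_mxP _ _ _).1 dC i' j')).
  by apply: nearW => y; rewrite block_mxEdl.
- apply: (near_eq_derivable _ ((derivable_mxP _ _ _).1 dE i' j')).
  by apply: nearW => y; rewrite block_mxEdr.
Qed.

Lemma derive_block_mx :
  'D_v (fun y => block_mx (A y) (B y) (C y) (E y)) x =
  block_mx ('D_v A x) ('D_v B x) ('D_v C x) ('D_v E x).
Proof.
apply/matrixP => i j; rewrite -derive_mx_entry; last exact: derivable_block_mx.
case: (split_ordP i) => i' ->; case: (split_ordP j) => j' ->.
- rewrite block_mxEul -derive_mx_entry //.
  by apply: near_eq_derive; apply: nearW => y; rewrite block_mxEul.
- rewrite block_mxEur -derive_mx_entry //.
  by apply: near_eq_derive; apply: nearW => y; rewrite block_mxEur.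
- rewrite block_mxEdl -derive_mx_entry //.
  by apply: near_eq_derive; apply: nearW => y; rewrite block_mxEdl.
- rewrite block_mxEdr -derive_mx_entry //.
  by apply: near_eq_derive; apply: nearW => y; rewrite block_mxEdr.
Qed.

End MatrixCalculus.

Section CoordinateFormulas.
Variables (R : realType) (n : nat).
Implicit Types (g T : 'rV[R]_n -> 'M[R]_n) (x : 'rV[R]_n) (D DT : 'I_n -> 'M[R]_n).

Lemma christoffelE g x D k i j :
  (forall l a b, partial l (fun y => g y a b) x = D l a b) ->
  christoffel g k i j x = christoffel_of (invmx (g x)) D k i j.
Proof.
by move=> hD; rewrite /christoffel /christoffel_of; under eq_bigr do rewrite !hD.
Qed.

Lemma divergenceE g T x D DT j :
  (forall l a b, partial l (fun y => g y a b) x = D l a b) ->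
  (forall l a b, partial l (fun y => T y a b) x = DT l a b) ->
  divergence g T j x = divergence_of (invmx (g x)) D (T x) DT j.
Proof.
move=> hD hDT; rewrite /divergence /divergence_of.
congr (_ + _ + _); apply: eq_bigr => i _; first exact: hDT.
all: by apply: eq_bigr => k _; rewrite !(christoffelE _ _ _ hD).
Qed.

Lemma sum_mul_entries m (A B : 'M[R]_m) :
  \sum_i \sum_j A i j * B i j = \tr (A *m B^T).
Proof. by apply: eq_bigr => i _; rewrite mxE; apply: eq_bigr => j _; rewrite mxE. Qed.

Lemma meanH_trace g T x : (g x)^T = g x -> g x \in unitmx ->
  meanH g T x = (1 - n%:R / 2) * \tr (g x *m T x).
Proof.
move=> g_sym gu; set G := g x; set S := T x.
have trGS : \tr (G *m S^T) = \tr (G *m S).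
  by rewrite -mxtrace_tr trmx_mul trmxK g_sym mxtrace_mulC.
rewrite /meanH /Kdown /Kup !sum_mul_entries trGS -/G -/S.
rewrite -[\tr (invmx G *m _)]mxtrace_tr trmx_mul trmxK trmx_inv g_sym mulmxK //.
rewrite mulmxBr raddfB /= -scalemxAr mxtraceZ mulmxV // mxtrace1 mxtrace_mulC.
by field.
Qed.

End CoordinateFormulas.

(* ['I_3] is convertible to ['I_(2 + 1)] but does not unify with ['I_(?m + ?n)],
   so the block-matrix lemmas are used below with explicit dimensions. *)
Lemma lshift_zidx (a : 'I_2) : lshift 1 a = lift zidx a.
Proof. by apply/val_inj; rewrite /= /bump leqNgt ltn_ord. Qed.

Lemma rshift_zidx (k : 'I_1) : rshift 2 k = zidx.
Proof. by apply/val_inj; rewrite /= (ord1 k). Qed.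

Section KaluzaKleinMetric.
Variables (R : realType) (gab : 'rV[R]_3 -> 'M[R]_2) (beta : 'rV[R]_3 -> 'rV[R]_2).
Local Notation g := (kaluza_metric gab beta).

Lemma kaluza_metric_block y :
  g y = block_mx (gab y + (beta y)^T *m beta y) (beta y)^T (beta y) 1%:M.
Proof.
apply/matrixP => i j.
case: (@split_ordP 2 1 i) => a ->; case: (@split_ordP 2 1 j) => b ->.
- by rewrite (@block_mxEul _ 2 1 2 1) !mxE !lshift_zidx !liftK big_ord1 !mxE.
- rewrite (@block_mxEur _ 2 1 2 1) !mxE lshift_zidx rshift_zidx liftK unlift_none.
  by rewrite (ord1 b).
- rewrite (@block_mxEdl _ 2 1 2 1) !mxE lshift_zidx rshift_zidx liftK unlift_none.
  by rewrite (ord1 a).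
- by rewrite (@block_mxEdr _ 2 1 2 1) !mxE !rshift_zidx unlift_none (ord1 a) (ord1 b).
Qed.

Lemma kaluza_metricE :
  g = fun y => block_mx (gab y + (beta y)^T *m beta y) (beta y)^T (beta y) 1%:M.
Proof. by apply/funext => y; rewrite kaluza_metric_block. Qed.

Lemma kaluza_metric_zz y : g y zidx zidx = 1.
Proof. by rewrite mxE unlift_none. Qed.

Lemma kaluza_metric_sym y : (gab y)^T = gab y -> (g y)^T = g y.
Proof.
move=> gab_sym; rewrite kaluza_metric_block (@tr_block_mx _ 2 1 2 1) linearD /=.
by rewrite trmx_mul trmxK gab_sym trmx1.
Qed.

Lemma kaluza_metric_inv y : gab y \in unitmx ->
  g y *m block_mx (invmx (gab y)) (- (invmx (gab y) *m (beta y)^T))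
    (- (beta y *m invmx (gab y))) (1%:M + beta y *m invmx (gab y) *m (beta y)^T)
  = 1%:M.
Proof.
by move=> gabu; rewrite kaluza_metric_block; exact: (@mulmx_kaluza_block_inv _ 2 1).
Qed.

Lemma kaluza_metric_unit y : gab y \in unitmx -> g y \in unitmx.
Proof. by move=> /kaluza_metric_inv /mulmx1_unit []. Qed.

Lemma invmx_kaluza_metric y : gab y \in unitmx ->
  invmx (g y) = block_mx (invmx (gab y)) (- (invmx (gab y) *m (beta y)^T))
    (- (beta y *m invmx (gab y))) (1%:M + beta y *m invmx (gab y) *m (beta y)^T).
Proof.
move=> gabu; have gu := kaluza_metric_unit gabu.
by rewrite -[RHS](mulKmx gu) kaluza_metric_inv // mulmx1.
Qed.

Variables (x v : 'rV[R]_3).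
Hypotheses (dgab : derivable gab x v) (dbeta : derivable beta x v).

Lemma derivable_kaluza_metric : derivable g x v.
Proof.
rewrite kaluza_metricE; apply: (@derivable_block_mx _ _ 2 1 2 1).
- exact: derivableD dgab (derivable_mulmx (derivable_trmx dbeta) dbeta).
- exact: derivable_trmx.
- exact: dbeta.
- exact: derivable_cst.
Qed.

Lemma derive_kaluza_metric_zz : 'D_v g x zidx zidx = 0.
Proof.
rewrite -derive_mx_entry; last exact: derivable_kaluza_metric.
by under [fun y => _]funext do rewrite kaluza_metric_zz; rewrite derive_cst.
Qed.

Hypothesis Dbeta0 : 'D_v beta x = 0.

Lemma derive_kaluza_metric : 'D_v g x = block_mx ('D_v gab x) 0 0 0.
Proof.
have dbbT := derivable_mulmx (derivable_trmx dbeta) dbeta.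
rewrite kaluza_metricE (@derive_block_mx _ _ 2 1 2 1); last first.
- exact: derivable_cst.
- exact: dbeta.
- exact: derivable_trmx.
- exact: derivableD dgab dbbT.
rewrite deriveD // derive_mulmx ?derive_trmx //; last exact: derivable_trmx.
by rewrite Dbeta0 trmx0 mul0mx mulmx0 !addr0 derive_cst.
Qed.

Lemma derive_kaluza_metric_col l : 'D_v g x l zidx = 0.
Proof.
rewrite derive_kaluza_metric -(rshift_zidx 0).
case: (@split_ordP 2 1 l) => a ->.
  by rewrite (@block_mxEur _ 2 1 2 1) mxE.
by rewrite (@block_mxEdr _ 2 1 2 1) mxE.
Qed.

Lemma mxtrace_invmx_derive_kaluza_metric : gab x \in unitmx ->
  \tr (invmx (g x) *m 'D_v g x) = \tr (invmx (gab x) *m 'D_v gab x).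
Proof.
move=> gabu; rewrite invmx_kaluza_metric // derive_kaluza_metric.
rewrite (@mulmx_block _ 2 1 2 1 2 1) (@mxtrace_block _ 2 1).
by rewrite !mulmx0 !addr0 mxtrace0 addr0.
Qed.

End KaluzaKleinMetric.

Section CorollaryT.
Variables (R : realType) (g : 'rV[R]_3 -> 'M[R]_3) (c : R).

Lemma corollary_TE y :
  corollary_T g c y = c *: delta_mx zidx zidx + (- (c / 3)) *: invmx (g y).
Proof. by apply/matrixP => i j; rewrite !mxE -mulnb natrM; ring. Qed.

Lemma mxtrace_corollary_T x : g x zidx zidx = 1 -> g x \in unitmx ->
  \tr (g x *m corollary_T g c x) = 0.
Proof.
move=> gzz gu; rewrite corollary_TE mulmxDr -!scalemxAr mxtraceD !mxtraceZ.
by rewrite mxtrace_mul_delta gzz mulmxV // mxtrace1; field.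
Qed.

Variables (x v : 'rV[R]_3).
Hypotheses (gu : \forall y \near x, g y \in unitmx) (dg : derivable g x v).

Lemma derivable_corollary_T : derivable (corollary_T g c) x v.
Proof.
rewrite (funext corollary_TE).
apply: (@derivableD _ _ _ (fun=> c *: delta_mx zidx zidx)
  (fun y => (- (c / 3)) *: invmx (g y))); first exact: derivable_cst.
exact: derivableZ (derivable_invmx gu dg).
Qed.

Lemma derive_corollary_T : 'D_v (corollary_T g c) x =
  (- (c / 3)) *: - (invmx (g x) *m 'D_v g x *m invmx (g x)).
Proof.
rewrite (funext corollary_TE) deriveD; last 2 first.
- exact: derivable_cst.
- exact: derivableZ _ (derivable_invmx gu dg).
by rewrite derive_cst add0r deriveZ ?derive_invmx //; exact: derivable_invmx.
Qed.

End CorollaryT.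

Section KaluzaKleinCorollary.
Variables (R : realType) (gab : 'rV[R]_3 -> 'M[R]_2) (beta : 'rV[R]_3 -> 'rV[R]_2).
Variables (c : R) (x : 'rV[R]_3).
Local Notation g := (kaluza_metric gab beta).
Local Notation T := (corollary_T g c).
Hypotheses (gab_sym : \forall y \near x, (gab y)^T = gab y)
  (gab_unit : \forall y \near x, gab y \in unitmx)
  (dgab : forall v, derivable gab x v) (dbeta : forall v, derivable beta x v)
  (det_z : 'D_(ecoord R zidx) (fun y => \det (gab y)) x = 0)
  (beta_z : 'D_(ecoord R zidx) beta x = 0).

Let g_sym : \forall y \near x, (g y)^T = g y.
Proof. exact: filterS (@kaluza_metric_sym _ _ _) gab_sym. Qed.

Let g_unit : \forall y \near x, g y \in unitmx.
Proof. exact: filterS (@kaluza_metric_unit _ _ _) gab_unit. Qed.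

Let dg v : derivable g x v.
Proof. exact: derivable_kaluza_metric. Qed.

Lemma divergence_corollary_T j : divergence g T j x = 0.
Proof.
set gi := invmx (g x); set D := fun l => 'D_(ecoord R l) g x.
have gi_sym : gi^T = gi by rewrite trmx_inv (nbhs_singleton g_sym).
have D_sym l : (D l)^T = D l by apply: derive_sym; [exact: g_sym | exact: dg].
have trz : \tr (gi *m D zidx) = 0.
  rewrite mxtrace_invmx_derive_kaluza_metric ?(nbhs_singleton gab_unit) //.
  rewrite mxtrace_invmx_mul ?(nbhs_singleton gab_unit) //.
  by rewrite -derive_det_mx2 // det_z mulr0.
rewrite (@divergenceE _ _ g T x D
  (fun l => c *: 0 + (- (c / 3)) *: - (gi *m D l *m gi))); first last.
- move=> l a b; rewrite /partial derive_mx_entry ?derive_corollary_T //.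
    by rewrite scaler0 add0r.
  exact: derivable_corollary_T.
- by move=> l a b; rewrite /partial derive_mx_entry.
rewrite corollary_TE divergence_of_lin divergence_of_inv_metric //.
rewrite divergence_of_delta // trz mulr0 mul0r add0r.
rewrite christoffel_of_kk_eq0 ?mulr0 ?addr0 //.
  by move=> l; exact: derive_kaluza_metric_zz.
by move=> l; exact: derive_kaluza_metric_col.
Qed.

Lemma meanH_corollary_T : meanH g T x = 0.
Proof.
have trT : \tr (g x *m T x) = 0.
  apply: mxtrace_corollary_T; first exact: kaluza_metric_zz.
  exact: nbhs_singleton g_unit.
rewrite meanH_trace ?trT ?mulr0 //.
  exact: nbhs_singleton g_sym.
exact: nbhs_singleton g_unit.
Qed.

End KaluzaKleinCorollary.

Theorem corollary3p2 (R : realType) (U : set 'rV[R]_3)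
  (gab : 'rV[R]_3 -> 'M[R]_2) (beta : 'rV[R]_3 -> 'rV[R]_2) (c : R) :
  open U ->
  (forall x, U x -> forall a b : 'I_2, differentiable (fun y => gab y a b) x) ->
  (forall x, U x -> forall a : 'I_2, differentiable (fun y => beta y 0 a) x) ->
  (forall x, U x -> posdef_mx (gab x)) ->
  (forall x, U x -> partial zidx (fun y => \det (gab y)) x = 0) ->
  (forall x, U x -> forall a : 'I_2, partial zidx (fun y => beta y 0 a) x = 0) ->
  forall x, U x ->
    (forall j : 'I_3,
       divergence (kaluza_metric gab beta) (corollary_T (kaluza_metric gab beta) c) j x = 0)
    /\ meanH (kaluza_metric gab beta) (corollary_T (kaluza_metric gab beta) c) x = 0.
Proof.
move=> Uo dgab dbeta gab_pd det_z beta_z x Ux.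
have nearU : \forall y \near x, U y by apply: open_nbhs_nbhs; split.
have gab_sym : \forall y \near x, (gab y)^T = gab y.
  by apply: filterS nearU => y /gab_pd[].
have gab_unit : \forall y \near x, gab y \in unitmx.
  by apply: filterS nearU => y /gab_pd/posdef_mx_unit.
have dgabx v : derivable gab x v.
  by apply/derivable_mxP => a b; apply: diff_derivable; exact: dgab.
have dbetax v : derivable beta x v.
  by apply/derivable_mxP => i a; rewrite (ord1 i); apply: diff_derivable; exact: dbeta.
have Dz_beta : 'D_(ecoord R zidx) beta x = 0.
  by apply/matrixP => i a; rewrite (ord1 i) -derive_mx_entry // mxE; exact: beta_z.
split=> [j|]; last exact: meanH_corollary_T.
by apply: divergence_corollary_T => //; exact: det_z.
Qed.
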